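(* Let $G$ be any finite multiset of phase-free $n$-qubit Pauli strings and let $P\in\{I,X,Y,Z\}^n$ be any Pauli string. For $A\subseteq\operatorname{supp}(P)$ define $\mathcal{L}_P(A)=\{a:A\to\{X,Y,Z\}: a(j)\neq P_j\text{ for every }j\in A\}$, $D_G(A,a)=|\{Q\in G: A\subseteq\operatorname{supp}(Q)\text{ and }Q_j=a(j)\text{ for all }j\in A\}|$ (with multiplicity), and $F_G(P,A)=\sum_{a\in\mathcal{L}_P(A)}D_G(A,a)$. Let \[ Z_G(P)=\sum_{A\subseteq\operatorname{supp}(P)}(-2)^{|A|}F_G(P,A),\qquad \operatorname{anti}_G(P)=\frac{|G|-Z_G(P)}{2}. \] Then $\operatorname{anti}_G(P)$ equals the number of strings $Q\in G$ (counted with multiplicity) that anticommute with $P$, i.e. satisfy $PQ=-QP$ as $2^n\times 2^n$ matrices.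
   Context: A phase-free $n$-qubit Pauli string is a word $P=(P_1,\dots,P_n)\in\{I,X,Y,Z\}^n$ with $I$ the $2\times2$ identity, $X=\begin{pmatrix}0&1\\1&0\end{pmatrix}$, $Y=\begin{pmatrix}0&-i\\ i&0\end{pmatrix}$, $Z=\begin{pmatrix}1&0\\0&-1\end{pmatrix}$; it is identified with the matrix $P_1\otimes\cdots\otimes P_n$. Its support is $\operatorname{supp}(P)=\{j: P_j\neq I\}$. $|G|$ denotes the size of the multiset $G$ counted with multiplicity. *)

From HB Require Import structures.
From mathcomp Require Import all_boot all_order all_algebra all_field.
From mathcomp Require Import mxtens.
Set Implicit Arguments. Unset Strict Implicit. Unset Printing Implicit Defensive.
Import Order.TTheory GRing.Theory Num.Theory.
Local Open Scope ring_scope.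

Inductive pauli := PI | PX | PY | PZ.

Definition pauli_to (p : pauli) : 'I_4 :=
  match p with PI => inord 0 | PX => inord 1 | PY => inord 2 | PZ => inord 3 end.
Definition pauli_of (i : 'I_4) : pauli :=
  match val i with 0 => PI | 1 => PX | 2 => PY | _ => PZ end.
Lemma pauli_toK : cancel pauli_to pauli_of.
Proof. by case; rewrite /pauli_of /= inordK. Qed.
HB.instance Definition _ := Finite.copy pauli (can_type pauli_toK).

Definition pauli_mx (p : pauli) : 'M[algC]_2 :=
  \matrix_(i < 2, j < 2)
   match p with
   | PI => if i == j then 1 else 0
   | PX => if i == j then 0 else 1
   | PY => if i == j then 0 else (if val i == 0%N then - 'i else 'i)
   | PZ => if i == j then (if val i == 0%N then 1 else -1) else 0
   end.

Definition pstring (n : nat) := n.-tuple pauli.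

Fixpoint pstr_mx (n : nat) : n.-tuple pauli -> 'M[algC]_(2 ^ n) :=
  match n with
  | 0 => fun _ => 1%:M
  | m.+1 => fun t =>
      castmx (esym (expnS 2 m), esym (expnS 2 m))
             (pauli_mx (thead t) *t pstr_mx (behead_tuple t))
  end.

Definition supp n (P : pstring n) : {set 'I_n} := [set j | tnth P j != PI].

Definition anticommb n (P Q : pstring n) : bool :=
  pstr_mx P *m pstr_mx Q == - (pstr_mx Q *m pstr_mx P).

(* L_P(A): functions a : A -> {X,Y,Z} with a(j) != P_j, encoded as
   functions on 'I_n that are PI outside A. *)
Definition LP n (P : pstring n) (A : {set 'I_n}) : pred {ffun 'I_n -> pauli} :=
  fun a => [forall j, if j \in A then (a j != PI) && (a j != tnth P j)
                      else a j == PI].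

Definition DG n (G : seq (pstring n)) (A : {set 'I_n}) (a : {ffun 'I_n -> pauli}) : nat :=
  count (fun Q => (A \subset supp Q) && [forall j in A, tnth Q j == a j]) G.

Definition FG n (G : seq (pstring n)) (P : pstring n) (A : {set 'I_n}) : nat :=
  (\sum_(a | LP P A a) DG G A a)%N.

Definition ZG n (G : seq (pstring n)) (P : pstring n) : int :=
  \sum_(A : {set 'I_n} | A \subset supp P) (-2) ^+ #|A| * (FG G P A)%:Z.

Definition antiG n (G : seq (pstring n)) (P : pstring n) : rat :=
  ((size G)%:R - (ZG G P)%:~R) / 2.

From mathcomp Require Import all_boot all_order all_algebra all_field.
From mathcomp Require Import mxtens.
From mathcomp Require Import ring.
Set Implicit Arguments. Unset Strict Implicit. Unset Printing Implicit Defensive.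
Import GRing.Theory Num.Theory.
Local Open Scope ring_scope.

(** The product of two Pauli strings picks up one factor -1 from each site
   where both letters are non-identity and distinct, since single Pauli
   matrices commute or anticommute and signs multiply through the Kronecker
   product; so P and Q anticommute iff the set S(P,Q) of such sites has odd
   size.  For fixed A and Q, the only a in L_P(A) that can agree with Q on A
   is the restriction of Q to A, and it lies in L_P(A) exactly when
   A is a subset of S(P,Q).  Hence Q contributes
   sum_{A <= S(P,Q)} (-2)^|A| = (1 - 2)^|S(P,Q)| = (-1)^|S(P,Q)| to Z_G(P),
   and |G| - Z_G(P) is twice the number of anticommuting strings. *)

Section KroneckerProduct.
Variable R : comPzRingType.

Lemma castmx_mulmx m m' (e : m = m') (A B : 'M[R]_m) :
  castmx (e, e) (A *m B) = castmx (e, e) A *m castmx (e, e) B.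
Proof. by case: m' / e. Qed.

Lemma castmxZ m n m' n' (e : (m = m') * (n = n')) (c : R) (A : 'M[R]_(m, n)) :
  castmx e (c *: A) = c *: castmx e A.
Proof. by apply/matrixP => i j; rewrite !castmxE !mxE castmxE. Qed.

Lemma tensmxZl m n p q (c : R) (A : 'M[R]_(m, n)) (B : 'M[R]_(p, q)) :
  (c *: A) *t B = c *: (A *t B).
Proof.
apply/matrixP => i j; case: (mxtens_indexP i) => i0 i1; case: (mxtens_indexP j) => j0 j1.
by rewrite (tensmxE (c *: A) B) [in RHS]mxE (tensmxE A B) mxE mulrA.
Qed.

Lemma tensmxZr m n p q (c : R) (A : 'M[R]_(m, n)) (B : 'M[R]_(p, q)) :
  A *t (c *: B) = c *: (A *t B).
Proof.
apply/matrixP => i j; case: (mxtens_indexP i) => i0 i1; case: (mxtens_indexP j) => j0 j1.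
by rewrite (tensmxE A (c *: B)) [in RHS]mxE (tensmxE A B) mxE mulrCA.
Qed.

Lemma tensmx11 m n : (1%:M : 'M[R]_m) *t (1%:M : 'M[R]_n) = 1%:M.
Proof.
apply/matrixP => i j; case: (mxtens_indexP i) => i0 i1; case: (mxtens_indexP j) => j0 j1.
rewrite (tensmxE (1%:M : 'M[R]_m)) !mxE (can_eq (@mxtens_indexK _ _)) xpair_eqE.
by case: (i0 == j0); case: (i1 == j1); rewrite ?mulr1 ?mulr0.
Qed.

End KroneckerProduct.

Lemma sum_subset_exp (T : finType) (R : comPzSemiRingType) (S : {set T}) (x : R) :
  \sum_(A : {set T} | A \subset S) x ^+ #|A| = (1 + x) ^+ #|S|.
Proof.
transitivity (\prod_(i : T) ((if i \in S then x else 0) + 1)); last first.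
  rewrite -prodr_const [RHS]big_mkcond; apply: eq_big => // i _.
  by case: ifP; rewrite ?add0r // addrC.
rewrite bigA_distr big_mkcond /=; apply: eq_bigr => A _.
case: (boolP (A \subset S)) => [sAS | /subsetPn [i iA /negbTE iS]].
  rewrite -prodr_const big_mkcond; apply: eq_big => // i _.
  by case: (boolP (i \in A)) => //= iA; rewrite (subsetP sAS i iA).
by rewrite (bigD1 i) //= iA iS mul0r.
Qed.

Lemma sum_sign_count (R : comPzRingType) (T : Type) (s : seq T) (k : T -> nat) :
  \sum_(x <- s) (-1) ^+ k x = (size s)%:R - 2 * (count (fun x => odd (k x)) s)%:R :> R.
Proof.
elim: s => [|x s IH]; first by rewrite big_nil mulr0 subr0.
rewrite big_cons IH -signr_odd /= mulrS natrD.
by case: (odd (k x)); rewrite /= ?expr0 ?expr1; ring.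
Qed.

Definition pauli_anticomm (p q : pauli) : bool :=
  match p, q with
  | PI, _ | _, PI | PX, PX | PY, PY | PZ, PZ => false
  | _, _ => true
  end.

Lemma pauli_anticommE p q :
  pauli_anticomm p q = [&& p != PI, q != PI & p != q].
Proof.
by case: p; case: q; rewrite /= ?eqxx ?andbF //; apply/esym/and3P; split; apply/eqP.
Qed.

Lemma mulCii : 'i * 'i = -1 :> algC.
Proof. by rewrite -expr2 sqrCi. Qed.

Lemma pauli_mx_sqr (p : pauli) : pauli_mx p *m pauli_mx p = 1%:M.
Proof.
apply/matrixP => i j; rewrite !mxE !big_ord_recl !big_ord0 !mxE.
case: i => [[|[|//]] ?]; case: j => [[|[|//]] ?]; case: p => /=;
  by rewrite ?(mulr0, mul0r, mulr1, mul1r, addr0, add0r, mulrN, mulNr, opprK, mulCii).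
Qed.

Lemma pauli_mx_commute (p q : pauli) :
  pauli_mx p *m pauli_mx q = (-1) ^+ pauli_anticomm p q *: (pauli_mx q *m pauli_mx p).
Proof.
apply/matrixP => i j; rewrite !mxE !big_ord_recl !big_ord0 !mxE.
case: i => [[|[|//]] ?]; case: j => [[|[|//]] ?]; case: p; case: q => /=;
  by rewrite ?(expr0, expr1, scale1r, mulr0, mul0r, mulr1, mul1r, addr0, add0r,
               mulrN, mulNr, opprK, mulCii, oppr0).
Qed.

Definition anticomm_sites n (P Q : pstring n) : {set 'I_n} :=
  [set j | pauli_anticomm (tnth P j) (tnth Q j)].

Lemma card_anticomm_sites0 (P Q : pstring 0) : #|anticomm_sites P Q| = 0%N.
Proof. by apply: eq_card0 => -[]. Qed.

Lemma card_anticomm_sitesS n (P Q : pstring n.+1) :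
  #|anticomm_sites P Q| =
  (pauli_anticomm (thead P) (thead Q)
   + #|anticomm_sites (behead_tuple P) (behead_tuple Q)|)%N.
Proof.
rewrite -!sum1_card big_mkcond big_ord_recl /= inE; congr (_ + _)%N.
rewrite [RHS]big_mkcond; apply: eq_bigr => j _; rewrite !inE !tnth_behead.
by have -> : inord j.+1 = lift ord0 j by apply: val_inj; rewrite /= inordK ?ltnS.
Qed.

Lemma pstr_mx_sqr n (P : pstring n) : pstr_mx P *m pstr_mx P = 1%:M.
Proof.
elim: n P => [|n IH] P /=; first by rewrite mulmx1.
rewrite -castmx_mulmx tensmx_mul pauli_mx_sqr IH tensmx11.
by apply/matrixP => i j; rewrite castmxE !mxE.
Qed.

Lemma pstr_mx_commute n (P Q : pstring n) :
  pstr_mx P *m pstr_mx Q =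
  (-1) ^+ #|anticomm_sites P Q| *: (pstr_mx Q *m pstr_mx P).
Proof.
elim: n P Q => [|n IH] P Q /=; first by rewrite card_anticomm_sites0 scale1r.
rewrite -!castmx_mulmx !tensmx_mul pauli_mx_commute IH tensmxZl tensmxZr.
by rewrite scalerA -exprD -card_anticomm_sitesS castmxZ.
Qed.

Lemma anticommbE n (P Q : pstring n) :
  anticommb P Q = odd #|anticomm_sites P Q|.
Proof.
rewrite /anticommb pstr_mx_commute -signr_odd.
case: (odd _); first by rewrite expr1 scaleN1r eqxx.
(* If PQ = QP = -QP then QP = 0, but QP is invertible since P^2 = Q^2 = 1. *)
rewrite expr0 scale1r; apply/negbTE/eqP => PQ_opp.
have QP0 : pstr_mx Q *m pstr_mx P = 0.
  apply/eqP; suff : 2%:R *: (pstr_mx Q *m pstr_mx P) == 0.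
    by rewrite scaler_eq0 pnatr_eq0.
  by rewrite scaler_nat mulr2n addr_eq0 -PQ_opp.
have : pstr_mx Q *m (pstr_mx Q *m pstr_mx P) *m pstr_mx P = 1%:M.
  by rewrite mulmxA pstr_mx_sqr mul1mx pstr_mx_sqr.
rewrite QP0 mulmx0 mul0mx => /matrixP/(_ (Ordinal (expn_gt0 2 n)) (Ordinal (expn_gt0 2 n))).
by rewrite !mxE eqxx => /eqP; rewrite eq_sym oner_eq0.
Qed.

Definition agrees_on n (A : {set 'I_n}) (a : {ffun 'I_n -> pauli}) (Q : pstring n)
  : bool :=
  (A \subset supp Q) && [forall j in A, tnth Q j == a j].

Definition restrict_on n (A : {set 'I_n}) (Q : pstring n) : {ffun 'I_n -> pauli} :=
  [ffun j => if j \in A then tnth Q j else PI].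

Lemma anticomm_sites_supp n (P Q : pstring n) : anticomm_sites P Q \subset supp P.
Proof. by apply/subsetP => j; rewrite !inE pauli_anticommE => /and3P []. Qed.

Lemma LP_agrees_onE n (P Q : pstring n) (A : {set 'I_n}) a : A \subset supp P ->
  LP P A a && agrees_on A a Q =
  (a == restrict_on A Q) && (A \subset anticomm_sites P Q).
Proof.
move=> /subsetP sAP; apply/andP/andP => [[/forallP LPa /andP [_ /forall_inP aQ]] | ].
  split.
    apply/eqP/ffunP => j; rewrite ffunE; have := LPa j.
    by case: ifP => [jA _ | _ /eqP //]; rewrite (eqP (aQ j jA)).
  apply/subsetP => j jA; have := LPa j; rewrite jA -(eqP (aQ j jA)) => /andP [QI QP].
  have := sAP j jA; rewrite !inE pauli_anticommE QI (eq_sym (tnth P j) (tnth Q j)) QP.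
  by rewrite !andbT.
move=> [/eqP -> /subsetP sAS]; split.
  apply/forallP => j; rewrite ffunE; case: (boolP (j \in A)) => //= jA.
  by have := sAS j jA; rewrite inE pauli_anticommE => /and3P [_ -> ]; rewrite eq_sym.
apply/andP; split; last by apply/forall_inP => j jA; rewrite ffunE jA.
by apply/subsetP => j jA; have := sAS j jA; rewrite !inE pauli_anticommE => /and3P [].
Qed.

Lemma sum_LP_agrees_on n (P Q : pstring n) (A : {set 'I_n}) : A \subset supp P ->
  (\sum_(a | LP P A a) agrees_on A a Q)%N = (A \subset anticomm_sites P Q).
Proof.
move=> sAP; rewrite big_mkcond /=.
rewrite (eq_bigr (fun a => (a == restrict_on A Q) && (A \subset anticomm_sites P Q) : nat));
  last by move=> a _; rewrite -LP_agrees_onE //; case: (LP P A a).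
by rewrite (bigD1 (restrict_on A Q)) //= eqxx big1 ?addn0 // => a /negbTE ->.
Qed.

Lemma FG_count n (G : seq (pstring n)) (P : pstring n) (A : {set 'I_n}) :
  A \subset supp P -> FG G P A = count (fun Q => A \subset anticomm_sites P Q) G.
Proof.
move=> sAP; elim: G => [|Q G IH]; first by rewrite /FG big1.
by rewrite /= -IH -(sum_LP_agrees_on Q sAP) /FG /DG -big_split.
Qed.

Lemma ZG_sum_sign n (G : seq (pstring n)) (P : pstring n) :
  ZG G P = \sum_(Q <- G) (-1) ^+ #|anticomm_sites P Q|.
Proof.
rewrite /ZG.
under eq_bigr => A sAP do
  rewrite (FG_count G sAP) -sum1_count big_mkcond -natz natr_sum mulr_sumr.
rewrite exchange_big; apply: eq_big => // Q _.
rewrite (_ : -1 = 1 + -2) // -sum_subset_exp big_mkcond [RHS]big_mkcond.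
apply: eq_big => // A _; case: (boolP (A \subset anticomm_sites P Q)) => sAS.
  by rewrite (subset_trans sAS (anticomm_sites_supp P Q)) mulr1.
by case: ifP; rewrite ?mulr0.
Qed.

Theorem theorem1 (n : nat) (G : seq (pstring n)) (P : pstring n) :
  antiG G P = (count (anticommb P) G)%:R.
Proof.
rewrite /antiG ZG_sum_sign sum_sign_count (eq_count (anticommbE P)).
by rewrite rmorphB rmorphM /= !rmorph_nat; field.
Qed.
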